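(* Let $Q=\{0,1,\dots,q-1\}$. Let $M\subseteq Q^5$ be an MDS code of length $5$ with code distance $4$, and let $M'\subseteq Q^4$ be the projection of $M$ onto some $4$ of its $5$ coordinates. Then there exists an MDS code $C\subseteq Q^4$ of length $4$ with code distance $2$ such that $M'\subseteq C$.
   Context: Let $Q=\{0,\dots,q-1\}$. A $t$-dimensional face of $Q^d$ is a set obtained by fixing the values of $d-t$ of the coordinates and letting the remaining $t$ coordinates range over $Q$. A subset $M\subseteq Q^d$ is an MDS code of length $d$ and code distance $t+1$ (written $MDS(t+1,d,q)$) if $|M\cap\Gamma|=1$ for every $t$-dimensional face $\Gamma$ of $Q^d$. The projection of $M$ onto a set $S$ of coordinates is the set of restrictions of the elements of $M$ to the coordinates in $S$. *)

From mathcomp Require Import all_boot.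
Set Implicit Arguments. Unset Strict Implicit. Unset Printing Implicit Defensive.

Definition word (d q : nat) := {ffun 'I_d -> 'I_q}.

Definition face (d q : nat) (S : {set 'I_d}) (a : word d q) : {set word d q} :=
  [set x : word d q | [forall i in S, x i == a i]].

(* M is an MDS(t+1, d, q) code: |M ∩ Γ| = 1 for every t-dimensional face Γ,
   i.e. every face obtained by fixing d - t coordinates. Here dist = t + 1. *)
Definition is_MDS (dist d q : nat) (M : {set word d q}) : Prop :=
  forall (S : {set 'I_d}) (a : word d q),
    #|S| = d - dist.-1 -> #|M :&: face S a| = 1.

Definition delete_coord (d q : nat) (j : 'I_d.+1) (x : word d.+1 q) : word d q :=
  [ffun i : 'I_d => x (lift j i)].

Definition project (d q : nat) (j : 'I_d.+1) (M : {set word d.+1 q}) : {set word d q} :=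
  [set delete_coord j x | x in M].

From mathcomp Require Import all_boot zify.
Set Implicit Arguments. Unset Strict Implicit. Unset Printing Implicit Defensive.

(* Any two coordinates of an MDS code of distance 4 in Q^5 determine the
   codeword, so the values at the coordinates u, v and j of its codewords form
   a Latin square.  Reading off the j-th value from the first two and from the
   last two of the four remaining coordinates gives Latin squares L1 and L2, and
   C = {y | L1(y0, y1) = L2(y2, y3)} contains the projection; in C each
   coordinate is determined by the other three, which is the MDS(2,4) property. *)

Definition upd d q (a : word d q) (k : 'I_d) (x : 'I_q) : word d q :=
  [ffun i => if i == k then x else a i].

Lemma upd_same d q (a : word d q) k x : upd a k x k = x.
Proof. by rewrite ffunE eqxx. Qed.

Lemma upd_other d q (a : word d q) k x i : i != k -> upd a k x i = a i.
Proof. by rewrite ffunE => /negbTE ->. Qed.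

Lemma face_compl1 d q (k : 'I_d) (a w : word d q) :
  (w \in face (~: [set k]) a) = (w == upd a k (w k)).
Proof.
rewrite inE; apply/forallP/eqP => [agree | ->] /=.
  apply/ffunP => i; rewrite ffunE; case: eqP => [-> // | /eqP ik].
  by move: (agree i); rewrite !inE ik => /eqP.
by move=> i; rewrite !inE; apply/implyP => ik; rewrite upd_other.
Qed.

Lemma is_MDS2P d q (C : {set word d.+1 q}) :
  (forall k a, exists! x, upd a k x \in C) -> is_MDS 2 C.
Proof.
move=> complete S a cardS.
have : #|~: S| == 1 by move: (cardsC S); rewrite cardS card_ord; lia.
case/cards1P => k defS.
rewrite -[S]setCK defS.
have [x [Cx uniq_x]] := complete k a.
apply/eqP/cards1P; exists (upd a k x); apply/setP => w; rewrite in_setI face_compl1 in_set1.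
apply/andP/eqP => [[Cw /eqP defw] | ->].
  by rewrite defw (uniq_x (w k)) // -defw.
by rewrite Cx upd_same.
Qed.

Definition code_rel d q (M : {set word d q}) (u v w : 'I_d) (x y z : 'I_q) : bool :=
  [exists c in M, [&& c u == x, c v == y & c w == z]].

Definition latin (T : Type) (R : T -> T -> T -> bool) : Prop :=
  [/\ forall y z, exists! x, R x y z, forall x z, exists! y, R x y z
    & forall x y, exists! z, R x y z].

Lemma latin_swap (T : Type) (R : T -> T -> T -> bool) :
  latin R -> latin (fun x y z => R y x z).
Proof. by case. Qed.

Section CodeOfDistanceLengthMinusOne.
Variables (d q : nat) (M : {set word d q}).
Hypothesis MDS_M : is_MDS d.-1 M.
Hypothesis d_gt1 : 1 < d.

Lemma MDS_pair_codeword (u v : 'I_d) (x y : 'I_q) : u != v ->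
  exists! c, [/\ c \in M, c u = x & c v = y].
Proof.
move=> uv; pose a : word d q := [ffun i => if i == u then x else y].
have : #|M :&: face [set u; v] a| == 1 by rewrite MDS_M // cards2 uv; lia.
case/cards1P => c defMa.
have inMa w : w \in M :&: face [set u; v] a <-> [/\ w \in M, w u = x & w v = y].
  rewrite !inE; split => [/andP[wM /forallP agree] | [wM wu wv]].
    move: (agree u) (agree v); rewrite !inE !eqxx orbT /= !ffunE eqxx.
    by rewrite [v == u]eq_sym (negbTE uv) => /eqP wu /eqP wv.
  rewrite wM; apply/forallP => i; rewrite !inE ffunE; apply/implyP.
  case/orP => /eqP ->; first by rewrite eqxx wu.
  by rewrite [v == u]eq_sym (negbTE uv) wv.
exists c; split => [|w /inMa]; first by apply/inMa; rewrite defMa set11.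
by rewrite defMa => /set1P ->.
Qed.

Lemma code_rel_latin (u v w : 'I_d) :
  u != v -> v != w -> w != u -> latin (code_rel M u v w).
Proof.
move=> uv vw wu; split => [y z | x z | x y].
- have [c [[cM cv cw] c_uniq]] := MDS_pair_codeword y z vw.
  exists (c u); split; first by apply/existsP; exists c; rewrite cM cv cw !eqxx.
  by move=> x' /existsP[c' /and4P[c'M /eqP <- /eqP c'v /eqP c'w]]; rewrite (c_uniq c').
- have [c [[cM cw cu] c_uniq]] := MDS_pair_codeword z x wu.
  exists (c v); split; first by apply/existsP; exists c; rewrite cM cw cu !eqxx.
  by move=> y' /existsP[c' /and4P[c'M /eqP c'u /eqP <- /eqP c'w]]; rewrite (c_uniq c').
- have [c [[cM cu cv] c_uniq]] := MDS_pair_codeword x y uv.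
  exists (c w); split; first by apply/existsP; exists c; rewrite cM cu cv !eqxx.
  by move=> z' /existsP[c' /and4P[c'M /eqP c'u /eqP c'v /eqP <-]]; rewrite (c_uniq c').
Qed.

End CodeOfDistanceLengthMinusOne.

Definition latin_join (T : finType) (R1 R2 : T -> T -> T -> bool) (x y x' y' : T) :=
  [exists z, R1 x y z && R2 x' y' z].

Lemma latin_joinC (T : finType) (R1 R2 : T -> T -> T -> bool) x y x' y' :
  latin_join R1 R2 x y x' y' = latin_join R2 R1 x' y' x y.
Proof. by apply: eq_existsb => z; rewrite andbC. Qed.

Lemma latin_join_unique (T : finType) (R1 R2 : T -> T -> T -> bool) y x' y' :
  latin R1 -> latin R2 -> exists! x, latin_join R1 R2 x y x' y'.
Proof.
case=> R1_x _ _ [_ _ R2_z].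
have [z [R2z z_uniq]] := R2_z x' y'.
have [x [R1x x_uniq]] := R1_x y z.
exists x; split; first by apply/existsP; exists z; rewrite R1x R2z.
move=> x1 /existsP[z1 /andP[R1x1 R2z1]].
by apply: x_uniq; rewrite (z_uniq z1 R2z1).
Qed.

Lemma latin_join_unique_r (T : finType) (R1 R2 : T -> T -> T -> bool) x y y' :
  latin R1 -> latin R2 -> exists! x', latin_join R1 R2 x y x' y'.
Proof.
move=> latin_R1 latin_R2.
have [x' [Jx' x'_uniq]] := latin_join_unique y' x y latin_R2 latin_R1.
by exists x'; split => [|x1]; rewrite latin_joinC //; apply: x'_uniq.
Qed.

Definition ord4_0 : 'I_4 := Ordinal (isT : 0 < 4).
Definition ord4_1 : 'I_4 := Ordinal (isT : 1 < 4).
Definition ord4_2 : 'I_4 := Ordinal (isT : 2 < 4).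
Definition ord4_3 : 'I_4 := Ordinal (isT : 3 < 4).

Definition latin_code q (R1 R2 : 'I_q -> 'I_q -> 'I_q -> bool) : {set word 4 q} :=
  [set y : word 4 q | latin_join R1 R2 (y ord4_0) (y ord4_1) (y ord4_2) (y ord4_3)].

Lemma eq_exists_unique (T : Type) (P Q : T -> bool) :
  (exists! x, P x) -> (forall x, P x = Q x) -> exists! x, Q x.
Proof.
by move=> [x [Px x_uniq]] eqPQ; exists x; split => [|y]; rewrite -eqPQ //; apply: x_uniq.
Qed.

Lemma latin_code_MDS q (R1 R2 : 'I_q -> 'I_q -> 'I_q -> bool) :
  latin R1 -> latin R2 -> is_MDS 2 (latin_code R1 R2).
Proof.
move=> latin_R1 latin_R2; apply: is_MDS2P => -[[|[|[|[|//]]]] lt_k4] a;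
  [ refine (eq_exists_unique (latin_join_unique
      (a ord4_1) (a ord4_2) (a ord4_3) latin_R1 latin_R2) _)
  | refine (eq_exists_unique (latin_join_unique
      (a ord4_0) (a ord4_2) (a ord4_3) (latin_swap latin_R1) latin_R2) _)
  | refine (eq_exists_unique (latin_join_unique_r
      (a ord4_0) (a ord4_1) (a ord4_3) latin_R1 latin_R2) _)
  | refine (eq_exists_unique (latin_join_unique_r
      (a ord4_0) (a ord4_1) (a ord4_2) latin_R1 (latin_swap latin_R2)) _) ];
  by move=> x; rewrite inE !ffunE.
Qed.

Theorem proposition2 (q : nat) (M : {set word 5 q}) (j : 'I_5) :
  @is_MDS 4 5 q M ->
  exists C : {set word 4 q}, @is_MDS 2 4 q C /\ @project 4 q j M \subset C.
Proof.
move=> MDS_M.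
have latin_lift i i' : i != i' -> latin (code_rel M (lift j i) (lift j i') j).
  move=> ii'; apply: (code_rel_latin MDS_M) => //.
  - by apply: contra ii' => /eqP /lift_inj ->.
  - by rewrite eq_sym neq_lift.
  - exact: neq_lift.
exists (latin_code (code_rel M (lift j ord4_0) (lift j ord4_1) j)
                   (code_rel M (lift j ord4_2) (lift j ord4_3) j)).
split; first by apply: latin_code_MDS; apply: latin_lift.
apply/subsetP => _ /imsetP[c cM ->]; rewrite inE; apply/existsP; exists (c j).
by rewrite !ffunE; apply/andP; split; apply/existsP; exists c; rewrite cM !eqxx.
Qed.
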